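(* Let $\mathcal S\in\mathrm{TP}(n)$ and let $C\subseteq[n]$ with $|C|\ge 2$. Let $D$ be the minimal element of $\mathrm{cip}(\mathcal S)$ containing $C$. Then there exist distinct $i,j\in C$ such that $\overline{ij}=D$.
   Context: A rooted tree on leaf set $[n]$ has leaves labeled bijectively by $[n]$ and internal vertices each with at least two children; a clade is the set of leaves below an internal vertex, and $\mathrm{clade}(T)$ is the set of clades (including $[n]$). $\mathrm{TP}(n)$ is the collection of all sets of the form $\mathcal S=\mathrm{clade}(T_1)\cup\mathrm{clade}(T_2)$ for rooted trees $T_1,T_2$ on leaf set $[n]$. The clade intersection poset $\mathrm{cip}(\mathcal S)$ consists of the elements of $\mathcal S$ together with all intersections of elements of $\mathcal S$ that contain at least two elements, partially ordered by inclusion. For a pair $i\ne j$, $\overline{ij}$ denotes the unique smallest element of $\mathrm{cip}(\mathcal S)$ containing $\{i,j\}$ (and, similarly, the minimal element of $\mathrm{cip}(\mathcal S)$ containing a set $C$ with $|C|\ge2$ is the intersection of all elements of $\mathcal S$ containing $C$). *)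

From mathcomp Require Import all_boot.
Set Implicit Arguments. Unset Strict Implicit. Unset Printing Implicit Defensive.

(* Leaf set [n] is represented by 'I_n (labels 0..n-1). *)

Inductive rtree (n : nat) : Type :=
| Leaf of 'I_n
| Node of seq (rtree n).

Arguments Leaf {n}.
Arguments Node {n}.

Fixpoint leaves (n : nat) (t : rtree n) : seq 'I_n :=
  match t with
  | Leaf i => [:: i]
  | Node ts => (fix lv (l : seq (rtree n)) : seq 'I_n :=
                  match l with [::] => [::] | u :: l' => leaves u ++ lv l' end) ts
  end.

Fixpoint wf_tree (n : nat) (t : rtree n) : bool :=
  match t with
  | Leaf _ => true
  | Node ts => (2 <= size ts) &&
      (fix wl (l : seq (rtree n)) : bool :=
         match l with [::] => true | u :: l' => wf_tree u && wl l' end) ts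
  end.

Definition is_tree_on (n : nat) (t : rtree n) : bool :=
  wf_tree t && perm_eq (leaves t) (enum 'I_n).

Fixpoint clade_list (n : nat) (t : rtree n) : seq {set 'I_n} :=
  match t with
  | Leaf _ => [::]
  | Node ts => [set x in leaves t] ::
      (fix cl (l : seq (rtree n)) : seq {set 'I_n} :=
         match l with [::] => [::] | u :: l' => clade_list u ++ cl l' end) ts
  end.

Definition clade (n : nat) (t : rtree n) : {set {set 'I_n}} := [set A in clade_list t].

Definition TP (n : nat) (S : {set {set 'I_n}}) : Prop :=
  exists T1 T2 : rtree n, is_tree_on T1 /\ is_tree_on T2 /\ S = clade T1 :|: clade T2.

Definition cip (n : nat) (S : {set {set 'I_n}}) : {set {set 'I_n}} :=
  S :|: [set A : {set 'I_n} | (2 <= #|A|) &&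
          [exists F : {set {set 'I_n}},
             [&& F \subset S, F != set0 & A == \bigcap_(B in F) B]]].

Definition min_cip (n : nat) (S : {set {set 'I_n}}) (C D : {set 'I_n}) : Prop :=
  D \in cip S /\ C \subset D /\ (forall E, E \in cip S -> C \subset E -> D \subset E).

From mathcomp Require Import all_boot.
Set Implicit Arguments.
Unset Strict Implicit.
Unset Printing Implicit Defensive.

(* The clades of a rooted tree form a laminar family. Relative to C, call i and
   j linked by a laminar family K when some member of K contains both but not
   all of C: this relation is symmetric and transitive, and does not link every
   pair of distinct points of C. Two such relations, one per tree, cannot
   together link every such pair, so some distinct i, j in C are linked in
   neither tree. Then every element of S containing i and j contains C, hence
   D, and so does every intersection of such elements. *)

Section TwoRelations.
Variables (T : finType) (A : {set T}) (R1 R2 : rel T).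
Hypotheses (R1_sym : symmetric R1) (R1_trans : transitive R1).
Hypotheses (R2_sym : symmetric R2) (R2_trans : transitive R2).

(* Every z <> x is R2-related to x: R1 z x and R1 z y would give R1 x y. *)
Lemma cover_total_of_unrelated x y :
  x \in A -> y \in A -> x != y -> ~~ R1 x y ->
  {in A &, forall u v, u != v -> R1 u v || R2 u v} ->
  {in A &, forall u v, u != v -> R2 u v}.
Proof.
move=> xA yA xy nR1xy cover.
have R2xy : R2 x y by move: (cover x y xA yA xy); rewrite (negbTE nR1xy).
have R2_x z : z \in A -> z != x -> R2 z x.
  move=> zA zx; case/orP: (cover z x zA xA zx) => // R1zx.
  have nR1zy : ~~ R1 z y.
    by apply: contra nR1xy; apply: R1_trans; rewrite (R1_sym x).
  have zy : z != y by apply: contraNneq nR1xy => <-; rewrite (R1_sym x).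
  move: (cover z y zA yA zy); rewrite (negbTE nR1zy) /= => R2zy.
  by apply: R2_trans R2zy _; rewrite (R2_sym y).
move=> u v uA vA; case: (eqVneq u x) => [-> xv|ux uv].
  by rewrite (R2_sym x) R2_x // eq_sym.
have [->|vx] := eqVneq v x; first exact: R2_x.
by apply: R2_trans (R2_x u uA ux) _; rewrite (R2_sym x) R2_x.
Qed.

Lemma exists_unrelated2 :
  (exists x y, [/\ x \in A, y \in A, x != y & ~~ R1 x y]) ->
  (exists x y, [/\ x \in A, y \in A, x != y & ~~ R2 x y]) ->
  exists x y, [/\ x \in A, y \in A, x != y & ~~ R1 x y && ~~ R2 x y].
Proof.
move=> [x [y [xA yA xy nR1xy]]] [u [v [uA vA uv nR2uv]]].
have [/exists_inP[a aA /exists_inP[b bA /andP[ab nR]]]|none] :=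
  boolP [exists a in A, exists b in A, (a != b) && (~~ R1 a b && ~~ R2 a b)].
  by exists a, b.
have cover : {in A &, forall a b, a != b -> R1 a b || R2 a b}.
  move=> a b aA bA ab; apply: contraR none => /norP[nR1 nR2].
  apply/exists_inP; exists a => //.
  by apply/exists_inP; exists b; rewrite ?ab ?nR1.
by move: nR2uv; rewrite (cover_total_of_unrelated xA yA xy nR1xy cover).
Qed.

End TwoRelations.

Section Laminar.
Variable T : finType.
Implicit Types (K : {set {set T}}) (A B C L : {set T}).

Definition laminar K :=
  {in K &, forall A B, [\/ A \subset B, B \subset A | [disjoint A & B]]}.

Lemma laminarU K1 K2 : laminar K1 -> laminar K2 ->
  {in K1 & K2, forall A B, [disjoint A & B]} -> laminar (K1 :|: K2).
Proof.
move=> lam1 lam2 dis A B; rewrite !inE => /orP[AK|AK] /orP[BK|BK].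
- exact: lam1.
- by apply: Or33; apply: dis.
- by apply: Or33; rewrite disjoint_sym; apply: dis.
- exact: lam2.
Qed.

Lemma laminarU1 L K : laminar K -> {in K, forall A, A \subset L} ->
  laminar (L |: K).
Proof.
move=> lamK subL A B; rewrite !inE => /predU1P[->|AK] /predU1P[->|BK].
- exact: Or31.
- by apply: Or32; apply: subL.
- by apply: Or31; apply: subL.
- exact: lamK.
Qed.

Definition linked K C : rel T :=
  fun i j => [exists B in K, [&& i \in B, j \in B & ~~ (C \subset B)]].

Lemma linked_sym K C : symmetric (linked K C).
Proof. by move=> i j; apply: eq_existsb_in => B _; rewrite andbCA. Qed.

Lemma linked_trans K C : laminar K -> transitive (linked K C).
Proof.
move=> lamK j i k /exists_inP[B BK /and3P[iB jB nCB]].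
case/exists_inP=> B' B'K /and3P[jB' kB' nCB'].
apply/exists_inP.
case: (lamK B B' BK B'K) => [/subsetP BB'|/subsetP B'B|dis].
- by exists B'; rewrite ?(BB' i iB) ?kB'.
- by exists B; rewrite ?iB ?(B'B k kB').
- by move: jB'; rewrite (disjointFr dis jB).
Qed.

Lemma sub_of_unlinked K C i j B : ~~ linked K C i j ->
  B \in K -> i \in B -> j \in B -> C \subset B.
Proof.
move=> nl BK iB jB; apply: contraNT nl => nCB.
by apply/exists_inP; exists B; rewrite ?iB ?jB.
Qed.

(* Take [x] in [C] and a largest member [B] of [K] containing [x] but not [C]:
   a point of [C] outside [B] cannot be linked to [x]. *)
Lemma laminar_exists_unlinked K C : laminar K -> 1 < #|C| ->
  exists i j, [/\ i \in C, j \in C, i != j & ~~ linked K C i j].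
Proof.
move=> lamK /card_gt1P[x [y [xC yC xy]]].
pose P B := [&& B \in K, x \in B & ~~ (C \subset B)].
have [B0 PB0|noB] := pickP P; last first.
  exists x, y; split=> //; apply/exists_inP=> -[B BK /andP[xB /andP[_ nCB]]].
  by move: (noB B); rewrite /P BK xB nCB.
case: (arg_maxnP (fun B : {set T} => #|B|) PB0) => B /and3P[BK xB nCB] Bmax.
have [z zC zB] := subsetPn nCB.
have xz : x != z by apply: contraNneq zB => <-.
exists x, z; split=> //; apply/exists_inP=> -[B' B'K /and3P[xB' zB' nCB']].
case: (lamK B B' BK B'K) => [BB'|/subsetP B'B|dis].
- have BB'proper : B \proper B' by apply/properP; split=> //; exists z.
  have : #|B'| <= #|B| by apply: Bmax; rewrite /P B'K xB'.
  by rewrite leqNgt proper_card.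
- by move: zB; rewrite B'B.
- by move: xB'; rewrite (disjointFr dis xB).
Qed.

End Laminar.

Section Clades.
Variable n : nat.
Implicit Types (t : rtree n) (ts : seq (rtree n)).

Fixpoint forest_leaves ts : seq 'I_n :=
  if ts is t :: ts' then leaves t ++ forest_leaves ts' else [::].

Fixpoint forest_clades ts : seq {set 'I_n} :=
  if ts is t :: ts' then clade_list t ++ forest_clades ts' else [::].

Lemma leaves_Node ts : leaves (Node ts) = forest_leaves ts.
Proof. by []. Qed.

Lemma clade_list_Node ts :
  clade_list (Node ts) = [set x in forest_leaves ts] :: forest_clades ts.
Proof. by []. Qed.

Section RtreeForestInd.
Variables (P : rtree n -> Prop) (Pf : seq (rtree n) -> Prop).
Hypothesis P_Leaf : forall i, P (Leaf i).
Hypothesis P_Node : forall ts, Pf ts -> P (Node ts).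
Hypothesis Pf_nil : Pf [::].
Hypothesis Pf_cons : forall t ts, P t -> Pf ts -> Pf (t :: ts).

Fixpoint rtree_nested_ind t : P t :=
  match t with
  | Leaf i => P_Leaf i
  | Node ts =>
      let fix forest ts : Pf ts :=
        if ts is u :: ts' then Pf_cons (rtree_nested_ind u) (forest ts')
        else Pf_nil
      in P_Node (forest ts)
  end.

Lemma rtree_forest_ind : (forall t, P t) /\ (forall ts, Pf ts).
Proof.
split; first exact: rtree_nested_ind.
by elim=> // t ts; apply: Pf_cons (rtree_nested_ind t).
Qed.

End RtreeForestInd.

Lemma clade_list_sub_leaves :
  (forall t, {in clade_list t, forall A : {set 'I_n}, A \subset leaves t}) /\
  (forall ts,
     {in forest_clades ts, forall A : {set 'I_n}, A \subset forest_leaves ts}).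
Proof.
apply: rtree_forest_ind => // [ts subL|t ts subt subts] A.
- rewrite clade_list_Node leaves_Node inE => /predU1P[->|/subL//].
  by apply/subsetP => x; rewrite inE.
- rewrite mem_cat => /orP[/subt|/subts] /subset_trans; apply.
    exact: subset_catl.
  exact: subset_catr.
Qed.

Lemma clade_list_laminar :
  (forall t, uniq (leaves t) -> laminar [set A in clade_list t]) /\
  (forall ts, uniq (forest_leaves ts) -> laminar [set A in forest_clades ts]).
Proof.
have [sub_tree sub_forest] := clade_list_sub_leaves.
apply: rtree_forest_ind => [i _ A B|ts lam|_ A B|t ts lamt lamts];
  rewrite ?inE //.
- rewrite clade_list_Node leaves_Node set_cons => /lam lamts.
  apply: laminarU1 lamts _ => A; rewrite inE.
  move=> /sub_forest /subset_trans; apply.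
  by apply/subsetP => x; rewrite inE.
- rewrite cat_uniq => /and3P[ut dis uts].
  have -> : [set A in clade_list t ++ forest_clades ts] =
            [set A in clade_list t] :|: [set A in forest_clades ts].
    by apply/setP => A; rewrite !inE mem_cat.
  apply: laminarU (lamt ut) (lamts uts) _ => A B.
  rewrite !inE => /sub_tree At /sub_forest Bts.
  apply: disjointWl At _; apply: disjointWr Bts _.
  by rewrite disjoint_sym disjoint_has.
Qed.

Lemma clade_laminar t : is_tree_on t -> laminar (clade t).
Proof.
case/andP => _ leaves_perm; apply: clade_list_laminar.1.
by rewrite (perm_uniq leaves_perm) enum_uniq.
Qed.

End Clades.

Lemma cip_lower_bound n (S : {set {set 'I_n}}) (X D : {set 'I_n}) :
  (forall B, B \in S -> X \subset B -> D \subset B) ->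
  forall E, E \in cip S -> X \subset E -> D \subset E.
Proof.
move=> lowS E; rewrite inE => /orP[/lowS //|]; rewrite inE.
case/andP=> _ /existsP[F /and3P[FS _ /eqP->]] XsubF.
apply/bigcapsP => B BF; apply: lowS; first exact: (subsetP FS).
exact: subset_trans XsubF (bigcap_inf _ BF).
Qed.

Theorem lemma3p10 (n : nat) (S : {set {set 'I_n}}) (C D : {set 'I_n}) :
  TP S -> 2 <= #|C| -> min_cip S C D ->
  exists i j : 'I_n, [/\ i \in C, j \in C, i != j & min_cip S [set i; j] D].
Proof.
move=> [T1 [T2 [tree1 [tree2 ->]]]] C2 [Dcip [CD Dmin]].
have lam1 := clade_laminar tree1; have lam2 := clade_laminar tree2.
have [i [j [iC jC ij /andP[nl1 nl2]]]] :=
  exists_unrelated2 (linked_sym _ C) (linked_trans (C := C) lam1)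
    (linked_sym _ C) (linked_trans (C := C) lam2)
    (laminar_exists_unlinked lam1 C2) (laminar_exists_unlinked lam2 C2).
have ijC : [set i; j] \subset C by rewrite subUset !sub1set iC jC.
exists i, j; split => //; split => //; split; first exact: subset_trans ijC CD.
apply: cip_lower_bound => B BS; rewrite subUset !sub1set => /andP[iB jB].
apply: Dmin; first exact: (subsetP (subsetUl _ _)).
by case/setUP: BS => BT; [exact: sub_of_unlinked nl1 BT iB jB |
                          exact: sub_of_unlinked nl2 BT iB jB].
Qed.
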